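(* Let $a,b\in\mathbb{R}[\sin t,\cos t]$ be real trigonometric polynomials with $b$ having only simple zeroes, consider $x'=a(t)|x|+b(t)$, and let $u(t,x)$ denote its solution with $u(0,x)=x$. Let $-\infty=x_0<x_1<\dots<x_r<x_{r+1}=+\infty$ be real numbers such that for each $i\in\{0,\dots,r\}$ and each $x\in(x_i,x_{i+1})$ all zeroes of $t\in[0,2\pi]\mapsto u(t,x)$ are simple, and their number is constant for $x\in(x_i,x_{i+1})$. Let $u(t)$ be a $2\pi$-periodic solution with $u(0)\notin\{x_1,\dots,x_r\}$. Then $u$ has an even number of zeroes in a period, all simple. Moreover: \begin{enumerate} \item If $u(0)>x_r$, then $u(t)>0$ for every $t\in\mathbb{R}$, and if $u(0)<x_1$, then $u(t)<0$ for every $t\in\mathbb{R}$. \item Assume that $x_1,\dots,x_r$ are exactly the values at $t=0$ of the solutions having a non-simple zero. If $x_1<u(0)<x_r$, then $u$ has non-definite sign, i.e. it is strictly positive for some values of $t$ and strictly negative for some other values. \end{enumerate}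
   Context: A solution is periodic if $u(0)=u(2\pi)$. A zero $t_0$ of a solution is simple if the derivative of the solution at $t_0$ (equal to $b(t_0)$) is nonzero. *)

From Stdlib Require Import Reals Lra Lia List.
From Coquelicot Require Import Coquelicot.
Import ListNotations.
Open Scope R_scope.

Definition trig_poly (f : R -> R) : Prop :=
  exists l : list (nat * nat * R),
    forall t, f t = fold_right
      (fun m acc => let '(i, j, c) := m in c * sin t ^ i * cos t ^ j + acc) 0 l.

Definition only_simple_zeros (f : R -> R) : Prop :=
  forall t, f t = 0 -> Derive f t <> 0.

Definition zeros_simple_on (f : R -> R) (lo hi : R) : Prop :=
  forall t, lo <= t <= hi -> f t = 0 -> Derive f t <> 0.

Definition card_set (P : R -> Prop) (n : nat) : Prop :=
  exists l : list R, NoDup l /\ (forall t, In t l <-> P t) /\ length l = n.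

Definition is_solution_map (a b : R -> R) (u : R -> R -> R) : Prop :=
  forall x, u 0 x = x /\
    forall t, is_derive (fun s => u s x) t (a t * Rabs (u t x) + b t).

(* x lies in the cell (x_i, x_{i+1}), with x_0 = -oo, x_{r+1} = +oo. *)
Definition in_cell (xs : nat -> R) (r i : nat) (x : R) : Prop :=
  (i = 0%nat \/ xs i < x) /\ (i = r \/ x < xs (S i)).

(* Since x |-> a(t)|x| + b(t) is Lipschitz, solutions are unique; hence u(t, x) is strictly
   increasing in x, and u(2 pi) = u(0) makes the solution 2 pi-periodic.  Between consecutive
   simple zeros a function keeps its sign, so it has an even number of zeros in (p, q) iff it
   leaves p and reaches q with the same sign.  For a periodic solution with u(0) <> 0 the signs
   at 0 and 2 pi agree; if u(0) = 0, the slopes at 0 and 2 pi both equal b(0), so the signs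
   disagree and the zero at t = 0 restores evenness.  A Gronwall-type comparison shows that a
   solution starting above T B exp(T A) (|a| <= A, |b| <= B) has no zero on [0, T], so the
   constant zero count of an unbounded cell is 0, which forces the sign of its solutions.
   Finally, if u(t1, x1) = 0 = u(tr, xr), monotonicity in x gives u(t1) > 0 > u(tr). *)

From Stdlib Require Import Reals Lra Lia List Classical.
From Coquelicot Require Import Coquelicot.
Open Scope R_scope.

Definition has_derivative (f df : R -> R) : Prop := forall t, is_derive f t (df t).

Lemma continuity_of_derivative (f df : R -> R) : has_derivative f df -> continuity f.
Proof.
  intros Hd t. apply derivable_continuous_pt. exists (df t). apply is_derive_Reals, Hd.
Qed.

Lemma has_derivative_opp (f df : R -> R) :
  has_derivative f df -> has_derivative (fun t => - f t) (fun t => - df t).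
Proof. intros Hd t. apply (is_derive_opp f t (df t)), Hd. Qed.

Lemma has_derivative_shift (f df : R -> R) c :
  has_derivative f df -> has_derivative (fun t => f (t + c)) (fun t => df (t + c)).
Proof.
  intros Hd t. replace (df (t + c)) with (scal 1 (df (t + c)))
    by (unfold scal; simpl; unfold mult; simpl; ring).
  apply (is_derive_comp f (fun s => s + c)); [apply Hd|auto_derive; auto].
Qed.

Lemma has_derivative_reflect (f df : R -> R) :
  has_derivative f df -> has_derivative (fun t => f (- t)) (fun t => - df (- t)).
Proof.
  intros Hd t. replace (- df (- t)) with (scal (-1) (df (- t))).
  - apply (is_derive_comp f Ropp); [apply Hd|auto_derive; auto].
  - unfold scal; simpl; unfold mult; simpl; ring.
Qed.

Lemma le_of_derivative_nonneg (g dg : R -> R) p q : p <= q ->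
  (forall t, p <= t <= q -> is_derive g t (dg t)) ->
  (forall t, p <= t <= q -> 0 <= dg t) -> g p <= g q.
Proof.
  intros Hpq Hd Hpos.
  destruct (MVT_gen g p q dg) as [c [Hc Heq]];
    rewrite ?Rmin_left, ?Rmax_right in * by lra.
  - intros x Hx. apply Hd; lra.
  - intros x Hx. apply derivable_continuous_pt. exists (dg x). apply is_derive_Reals, Hd; lra.
  - assert (0 <= dg c * (q - p)) by (apply Rmult_le_pos; [apply Hpos|]; lra). lra.
Qed.

Lemma IVT_unordered (f : R -> R) p q :
  continuity f -> f p * f q <= 0 -> exists z, f z = 0.
Proof.
  intros Hc Hpq. destruct (Rle_dec p q).
  - destruct (IVT_cor f p q Hc) as [z [_ Hz]]; eauto.
  - destruct (IVT_cor f q p Hc) as [z [_ Hz]]; [lra|rewrite Rmult_comm; auto|eauto].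
Qed.

Lemma pos_of_zero_free (f : R -> R) p q : continuity f -> p <= q -> 0 < f p ->
  (forall t, p <= t <= q -> f t <> 0) -> 0 < f q.
Proof.
  intros Hc Hpq Hp Hnz. destruct (Rlt_or_le 0 (f q)) as [|Hq]; auto.
  destruct (IVT_cor f p q Hc Hpq) as [z [Hz Hfz]]; [nra|].
  exfalso. exact (Hnz z Hz Hfz).
Qed.

Lemma pos_right_of_derive_pos (f : R -> R) z l : is_derive f z l -> f z = 0 -> 0 < l ->
  exists d, 0 < d /\ forall h, 0 < h < d -> 0 < f (z + h).
Proof.
  intros Hd Hz Hl. apply is_derive_Reals in Hd.
  destruct (Hd l Hl) as [del Hdel]. exists del. split; [apply cond_pos|].
  intros h Hh.
  assert (H := Hdel h ltac:(lra) ltac:(rewrite Rabs_pos_eq; lra)).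
  rewrite Hz, Rminus_0_r in H. apply Rabs_def2 in H.
  replace (f (z + h)) with (f (z + h) / h * h) by (field; lra).
  apply Rmult_lt_0_compat; lra.
Qed.

(* [f] is positive just to the right of [p] (resp. left of [q]); at a zero this is read off
   the derivative, which is faithful only at simple zeros. *)
Definition positive_after (f df : R -> R) (p : R) : Prop :=
  0 < f p \/ (f p = 0 /\ 0 < df p).

Definition positive_before (f df : R -> R) (q : R) : Prop :=
  0 < f q \/ (f q = 0 /\ df q < 0).

Lemma positive_after_pos (f df : R -> R) p m : has_derivative f df -> p < m ->
  (forall t, p < t <= m -> f t <> 0) -> positive_after f df p -> 0 < f m.
Proof.
  intros Hd Hpm Hnz Hp. assert (Hc := continuity_of_derivative f df Hd).
  destruct Hp as [Hp | [Hp Hdp]].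
  - apply (pos_of_zero_free f p m Hc); [lra|auto|].
    intros t Ht. destruct (Req_dec t p) as [->|]; [lra|]. apply Hnz; lra.
  - destruct (pos_right_of_derive_pos f p (df p) (Hd p) Hp Hdp) as [d [Hd0 Hloc]].
    set (h := Rmin (d / 2) (m - p)).
    assert (0 < h) by (apply Rmin_pos; lra).
    assert (h < d) by (generalize (Rmin_l (d / 2) (m - p)); unfold h; lra).
    assert (h <= m - p) by apply Rmin_r.
    apply (pos_of_zero_free f (p + h) m Hc); [lra|apply Hloc; lra|].
    intros t Ht. apply Hnz; lra.
Qed.

Lemma positive_before_reflect (f df : R -> R) q :
  positive_before f df q <->
  positive_after (fun t => f (- t)) (fun t => - df (- t)) (- q).
Proof. unfold positive_before, positive_after. rewrite Ropp_involutive. lra. Qed.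

Lemma positive_before_pos (f df : R -> R) q m : has_derivative f df -> m < q ->
  (forall t, m <= t < q -> f t <> 0) -> positive_before f df q -> 0 < f m.
Proof.
  intros Hd Hmq Hnz Hq. rewrite <- (Ropp_involutive m).
  apply (positive_after_pos (fun t => f (- t)) (fun t => - df (- t)) (- q) (- m)).
  - apply has_derivative_reflect, Hd.
  - lra.
  - intros t Ht. apply Hnz. lra.
  - apply positive_before_reflect, Hq.
Qed.

Lemma positive_after_opp (f df : R -> R) p : f p <> 0 \/ df p <> 0 ->
  (positive_after (fun t => - f t) (fun t => - df t) p <-> ~ positive_after f df p).
Proof.
  unfold positive_after. intros H.
  destruct (Rtotal_order (f p) 0) as [|[|]]; destruct (Rtotal_order (df p) 0) as [|[|]];
    destruct H; lra.
Qed.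

Lemma positive_before_opp (f df : R -> R) q : f q <> 0 \/ df q <> 0 ->
  (positive_before (fun t => - f t) (fun t => - df t) q <-> ~ positive_before f df q).
Proof.
  unfold positive_before. intros H.
  destruct (Rtotal_order (f q) 0) as [|[|]]; destruct (Rtotal_order (df q) 0) as [|[|]];
    destruct H; lra.
Qed.

Lemma positive_before_iff_not_after (f df : R -> R) z : f z = 0 -> df z <> 0 ->
  (positive_before f df z <-> ~ positive_after f df z).
Proof.
  unfold positive_before, positive_after. intros Hz Hdz.
  destruct (Rtotal_order (df z) 0) as [|[|]]; lra.
Qed.

Lemma positive_after_iff_before (f df : R -> R) p q : has_derivative f df -> p < q ->
  (forall t, p < t < q -> f t <> 0) ->
  (f p <> 0 \/ df p <> 0) -> (f q <> 0 \/ df q <> 0) ->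
  (positive_after f df p <-> positive_before f df q).
Proof.
  intros Hd Hpq Hnz Hp Hq. set (m := (p + q) / 2).
  assert (Hd' := has_derivative_opp f df Hd).
  assert (Hnz' : forall t, p < t < q -> - f t <> 0).
  { intros t Ht. apply Ropp_neq_0_compat, Hnz, Ht. }
  assert (After : positive_after f df p -> 0 < f m).
  { intro H. apply (positive_after_pos f df p m Hd); auto; [unfold m; lra|].
    intros t Ht. apply Hnz. unfold m in Ht. lra. }
  assert (NotAfter : ~ positive_after f df p -> 0 < - f m).
  { intro H. apply (positive_after_pos _ _ p m Hd'); [unfold m; lra| |].
    - intros t Ht. apply Hnz'. unfold m in Ht. lra.
    - apply positive_after_opp; auto. }
  assert (Before : positive_before f df q -> 0 < f m).
  { intro H. apply (positive_before_pos f df q m Hd); auto; [unfold m; lra|].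
    intros t Ht. apply Hnz. unfold m in Ht. lra. }
  assert (NotBefore : ~ positive_before f df q -> 0 < - f m).
  { intro H. apply (positive_before_pos _ _ q m Hd'); [unfold m; lra| |].
    - intros t Ht. apply Hnz'. unfold m in Ht. lra.
    - apply positive_before_opp; auto. }
  split; intro H; apply NNPP; intro H'.
  - specialize (After H). specialize (NotBefore H'). lra.
  - specialize (Before H). specialize (NotAfter H'). lra.
Qed.

Lemma card_set_ext (P Q : R -> Prop) n :
  (forall t, P t <-> Q t) -> card_set P n -> card_set Q n.
Proof.
  intros H [l [Hnd [Hin Hlen]]]. exists l. split; [auto|split; [|auto]].
  intros t. rewrite Hin. apply H.
Qed.

Lemma card_set_0 (P : R -> Prop) : card_set P 0 -> forall t, ~ P t.
Proof. intros [[|] [_ [Hin Hlen]]] t Ht; [apply (Hin t), Ht|discriminate]. Qed.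

Lemma card_set_remove (P : R -> Prop) n z : card_set P n -> P z ->
  exists k, n = S k /\ card_set (fun t => P t /\ t <> z) k.
Proof.
  intros [l [Hnd [Hin Hlen]]] Hz.
  apply Hin in Hz. destruct (in_split _ _ Hz) as [l1 [l2 ->]].
  exists (length (l1 ++ l2)). split.
  - rewrite <- Hlen, !length_app. simpl. lia.
  - exists (l1 ++ l2). split; [eapply NoDup_remove_1; eauto|split; [|auto]].
    intro t. rewrite <- Hin, !in_app_iff. simpl. split.
    + intros Ht. split; [tauto|]. intros ->. eapply NoDup_remove_2; eauto.
      apply in_app_iff. exact Ht.
    + intros [[|[<-|]] Hne]; tauto.
Qed.

Lemma card_set_without (P : R -> Prop) n z : card_set P n ->
  exists k, card_set (fun t => P t /\ t <> z) k.
Proof.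
  intros Hc. destruct (classic (P z)) as [Hz|Hz].
  - destruct (card_set_remove P n z Hc Hz) as [k [_ Hk]]. eauto.
  - exists n. apply (card_set_ext P); auto.
    intros t. split; [|tauto]. intros Ht. split; [auto|]. intros ->. contradiction.
Qed.

Lemma list_has_min (l : list R) : l <> nil -> exists z, In z l /\ forall t, In t l -> z <= t.
Proof.
  induction l as [|x l IH]; intros H; [congruence|].
  destruct l as [|y l'].
  - exists x. split; [left; auto|]. intros t [->|[]]. lra.
  - destruct IH as [z [Hz Hmin]]; [discriminate|].
    destruct (Rle_dec x z).
    + exists x. split; [left; auto|]. intros t [->|Ht]; [lra|]. specialize (Hmin t Ht). lra.
    + exists z. split; [right; auto|]. intros t [<-|Ht]; [lra|auto].
Qed.

Lemma card_set_min (P : R -> Prop) n : card_set P (S n) ->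
  exists z, P z /\ forall t, P t -> z <= t.
Proof.
  intros [l [_ [Hin Hlen]]]. destruct (list_has_min l) as [z [Hz Hm]].
  - intros ->. discriminate.
  - exists z. split; [apply Hin; auto|]. intros t Ht. apply Hm, Hin, Ht.
Qed.

Lemma zeros_simple_on_nondegenerate (f df : R -> R) p q t : has_derivative f df ->
  zeros_simple_on f p q -> p <= t <= q -> f t <> 0 \/ df t <> 0.
Proof.
  intros Hd Hs Ht. destruct (Req_dec (f t) 0) as [Hz|]; [right|left; auto].
  rewrite <- (is_derive_unique f t (df t) (Hd t)). apply Hs; auto.
Qed.

Lemma Even_succ_iff n : Nat.Even (S n) <-> ~ Nat.Even n.
Proof.
  rewrite Nat.Even_succ. split.
  - intros Ho He. exact (Nat.Even_Odd_False n He Ho).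
  - intros H. destruct (Nat.Even_or_Odd n); tauto.
Qed.

Lemma zeros_parity (f df : R -> R) q : has_derivative f df -> forall k p, p < q ->
  zeros_simple_on f p q -> card_set (fun t => p < t < q /\ f t = 0) k ->
  (Nat.Even k <-> (positive_after f df p <-> positive_before f df q)).
Proof.
  intros Hd k. induction k as [|k IH]; intros p Hpq Hs Hc.
  - assert (Hnz : forall t, p < t < q -> f t <> 0).
    { intros t Ht H0. exact (card_set_0 _ Hc t (conj Ht H0)). }
    split; [intros _|intros _; exists 0%nat; reflexivity].
    apply (positive_after_iff_before f df p q Hd Hpq Hnz);
      apply (zeros_simple_on_nondegenerate f df p q); auto; lra.
  - destruct (card_set_min _ _ Hc) as [z [[Hz Hfz] Hmin]].
    destruct (card_set_remove _ _ z Hc) as [k' [Hk' Hc']]; [auto|].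
    injection Hk' as <-.
    assert (Hdz : df z <> 0).
    { destruct (zeros_simple_on_nondegenerate f df p q z Hd Hs); auto; lra. }
    assert (Right : Nat.Even k <-> (positive_after f df z <-> positive_before f df q)).
    { apply IH; [lra| |].
      - intros t Ht. apply Hs. lra.
      - eapply card_set_ext; [|exact Hc']. intros t. split.
        + intros [[Ht Hft] Hne]. assert (z <= t) by (apply Hmin; auto). split; [lra|auto].
        + intros [Ht Hft]. split; [split; [lra|auto]|lra]. }
    assert (Left : positive_after f df p <-> positive_before f df z).
    { apply (positive_after_iff_before f df p z Hd); [lra| |  |right; auto].
      - intros t Ht H0. assert (z <= t) by (apply Hmin; split; [lra|auto]). lra.
      - apply (zeros_simple_on_nondegenerate f df p q); auto; lra. }
    rewrite (positive_before_iff_not_after f df z Hfz Hdz) in Left.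
    rewrite Even_succ_iff, Right. tauto.
Qed.

Lemma even_zeros_of_periodic (f df : R -> R) p q n : p < q -> has_derivative f df ->
  f q = f p -> df q = df p -> zeros_simple_on f p q ->
  card_set (fun t => p <= t < q /\ f t = 0) n -> Nat.Even n.
Proof.
  intros Hpq Hd Hfq Hdfq Hs Hc.
  assert (Ends : positive_before f df q <-> positive_before f df p).
  { unfold positive_before. rewrite Hfq, Hdfq. tauto. }
  assert (Par := zeros_parity f df q Hd).
  destruct (Req_dec (f p) 0) as [Hfp|Hfp].
  - destruct (card_set_remove _ n p Hc) as [k [-> Hk]]; [split; [lra|auto]|].
    assert (Hdp : df p <> 0).
    { destruct (zeros_simple_on_nondegenerate f df p q p Hd Hs); auto; lra. }
    rewrite Even_succ_iff, (Par k p Hpq Hs), Ends, (positive_before_iff_not_after f df p Hfp Hdp).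
    + tauto.
    + eapply card_set_ext; [|exact Hk]. intros t. split.
      * intros [[Ht Hft] Hne]. split; [lra|auto].
      * intros [Ht Hft]. split; [split; [lra|auto]|lra].
  - apply (Par n p Hpq Hs).
    + eapply card_set_ext; [|exact Hc]. intros t. split.
      * intros [Ht Hft]. split; [|auto]. split; [|lra].
        destruct (Req_dec t p) as [->|]; [contradiction|lra].
      * intros [Ht Hft]. split; [lra|auto].
    + rewrite Ends. unfold positive_after, positive_before. tauto.
Qed.

Lemma has_derivative_exp_scale (g dg : R -> R) c : has_derivative g dg ->
  has_derivative (fun s => exp (c * s) * g s) (fun s => exp (c * s) * (c * g s + dg s)).
Proof.
  intros Hd t. auto_derive.
  - exists (dg t). apply Hd.
  - replace (Derive (fun x => g x) t) with (dg t) by (symmetry; apply is_derive_unique, Hd).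
    ring.
Qed.

Lemma gronwall_zero_before (g dg : R -> R) K t0 : has_derivative g dg ->
  (forall t, 0 <= g t) -> (forall t, Rabs (dg t) <= K * g t) -> g t0 = 0 ->
  forall t, t <= t0 -> g t = 0.
Proof.
  intros Hd Hg HK H0 t Ht.
  assert (Hmono : exp (K * t) * g t <= exp (K * t0) * g t0).
  { apply (le_of_derivative_nonneg (fun s => exp (K * s) * g s)
                                    (fun s => exp (K * s) * (K * g s + dg s))); auto.
    - intros s _. apply has_derivative_exp_scale, Hd.
    - intros s _. apply Rmult_le_pos; [apply Rlt_le, exp_pos|].
      specialize (HK s). apply Rabs_le_between in HK. lra. }
  rewrite H0, Rmult_0_r in Hmono.
  assert (0 < exp (K * t)) by apply exp_pos. specialize (Hg t). nra.
Qed.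

Lemma gronwall_zero (g dg : R -> R) K t0 : has_derivative g dg ->
  (forall t, 0 <= g t) -> (forall t, Rabs (dg t) <= K * g t) -> g t0 = 0 ->
  forall t, g t = 0.
Proof.
  intros Hd Hg HK H0 t. destruct (Rle_dec t t0).
  - apply (gronwall_zero_before g dg K t0); auto.
  - rewrite <- (Ropp_involutive t).
    apply (gronwall_zero_before (fun s => g (- s)) (fun s => - dg (- s)) K (- t0)).
    + apply has_derivative_reflect, Hd.
    + intros s. apply Hg.
    + intros s. rewrite Rabs_Ropp. apply HK.
    + rewrite Ropp_involutive. exact H0.
    + lra.
Qed.

Lemma lipschitz_ode_unique (F : R -> R -> R) L (v w : R -> R) t0 :
  (forall t y z, Rabs (F t y - F t z) <= L * Rabs (y - z)) ->
  has_derivative v (fun t => F t (v t)) -> has_derivative w (fun t => F t (w t)) ->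
  v t0 = w t0 -> forall t, v t = w t.
Proof.
  intros HL Hv Hw H0 t.
  assert (Hd : has_derivative (fun s => (v s - w s) ^ 2)
                 (fun s => 2 * (v s - w s) * (F s (v s) - F s (w s)))).
  { intros s. auto_derive.
    - split; [exists (F s (v s)); apply Hv|split; [exists (F s (w s)); apply Hw|auto]].
    - replace (Derive (fun x => v x) s) with (F s (v s)) by (symmetry; apply is_derive_unique, Hv).
      replace (Derive (fun x => w x) s) with (F s (w s)) by (symmetry; apply is_derive_unique, Hw).
      ring. }
  assert (Hbound : forall s, Rabs (2 * (v s - w s) * (F s (v s) - F s (w s)))
                             <= 2 * L * (v s - w s) ^ 2).
  { intros s. rewrite Rabs_mult.
    replace (2 * L * (v s - w s) ^ 2) with (Rabs (2 * (v s - w s)) * (L * Rabs (v s - w s))).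
    - apply Rmult_le_compat_l; [apply Rabs_pos|apply HL].
    - rewrite Rabs_mult, (Rabs_pos_eq 2), <- (pow2_abs (v s - w s)) by lra. ring. }
  assert (Hzero := gronwall_zero _ _ (2 * L) t0 Hd (fun s => pow2_ge_0 _) Hbound
                     ltac:(cbv beta; rewrite H0; ring) t).
  cbv beta in Hzero. nra.
Qed.

Definition is_solution (a b v : R -> R) : Prop :=
  has_derivative v (fun t => a t * Rabs (v t) + b t).

Lemma is_solution_map_solution (a b : R -> R) u x :
  is_solution_map a b u -> is_solution a b (fun t => u t x).
Proof. intros Hu t. apply (proj2 (Hu x)). Qed.

Lemma is_solution_map_opp (a b : R -> R) u : is_solution_map a b u ->
  is_solution_map (fun t => - a t) (fun t => - b t) (fun t x => - u t (- x)).
Proof.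
  intros Hu x. split.
  - rewrite (proj1 (Hu (- x))). ring.
  - intros t. rewrite Rabs_Ropp.
    replace (- a t * Rabs (u t (- x)) + - b t) with (- (a t * Rabs (u t (- x)) + b t)) by ring.
    exact (has_derivative_opp _ _ (is_solution_map_solution a b u (- x) Hu) t).
Qed.

Lemma solution_unique (a b v w : R -> R) A t0 : (forall t, Rabs (a t) <= A) ->
  is_solution a b v -> is_solution a b w -> v t0 = w t0 -> forall t, v t = w t.
Proof.
  intros HA. apply (lipschitz_ode_unique (fun t y => a t * Rabs y + b t) A).
  intros t y z.
  replace (a t * Rabs y + b t - (a t * Rabs z + b t)) with (a t * (Rabs y - Rabs z)) by ring.
  rewrite Rabs_mult. apply Rmult_le_compat; try apply Rabs_pos; [apply HA|].
  apply Rabs_triang_inv2.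
Qed.

Lemma solution_periodic (a b v : R -> R) A T : (forall t, Rabs (a t) <= A) ->
  (forall t, a (t + T) = a t) -> (forall t, b (t + T) = b t) ->
  is_solution a b v -> v T = v 0 -> forall t, v (t + T) = v t.
Proof.
  intros HA Ha Hb Hv HT. apply (solution_unique a b _ v A 0 HA); auto.
  - intros t. rewrite <- Ha, <- Hb. apply (has_derivative_shift v _ T Hv).
  - rewrite Rplus_0_l. exact HT.
Qed.

Lemma solution_map_increasing (a b : R -> R) A u : (forall t, Rabs (a t) <= A) ->
  is_solution_map a b u -> forall x y t, x < y -> u t x < u t y.
Proof.
  intros HA Hu x y t Hxy. apply Rnot_le_lt. intros Hle.
  set (d := fun s => u s y - u s x).
  assert (Hd : has_derivative d (fun s => (a s * Rabs (u s y) + b s) - (a s * Rabs (u s x) + b s))).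
  { intros s. apply (is_derive_minus (fun s => u s y) (fun s => u s x));
      apply is_solution_map_solution, Hu. }
  assert (Hd0 : d 0 = y - x) by (unfold d; rewrite (proj1 (Hu x)), (proj1 (Hu y)); ring).
  destruct (IVT_unordered d 0 t (continuity_of_derivative _ _ Hd)) as [s Hs].
  { rewrite Hd0. unfold d. nra. }
  assert (Heq := solution_unique a b (fun t => u t y) (fun t => u t x) A s HA
                   (is_solution_map_solution a b u y Hu) (is_solution_map_solution a b u x Hu)
                   ltac:(unfold d in Hs; lra) 0).
  cbv beta in Heq. rewrite (proj1 (Hu x)), (proj1 (Hu y)) in Heq. lra.
Qed.

Lemma trig_poly_periodic (f : R -> R) : trig_poly f -> forall t, f (t + 2 * PI) = f t.
Proof.
  intros [l Hl] t. rewrite !Hl.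
  replace (sin (t + 2 * PI)) with (sin t) by (rewrite sin_plus, sin_2PI, cos_2PI; ring).
  replace (cos (t + 2 * PI)) with (cos t) by (rewrite cos_plus, sin_2PI, cos_2PI; ring).
  reflexivity.
Qed.

Lemma trig_poly_bounded (f : R -> R) : trig_poly f -> exists A, forall t, Rabs (f t) <= A.
Proof.
  intros [l Hl].
  assert (Hpow : forall x n, Rabs x <= 1 -> Rabs (x ^ n) <= 1).
  { intros x n Hx. rewrite <- RPow_abs, <- (pow1 n). apply pow_incr.
    split; [apply Rabs_pos|exact Hx]. }
  enough (Hsum : exists A, forall t, Rabs (fold_right
      (fun m acc => let '(i, j, c) := m in c * sin t ^ i * cos t ^ j + acc) 0 l) <= A).
  { destruct Hsum as [A HA]. exists A. intros t. rewrite Hl. apply HA. }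
  clear Hl.
  induction l as [|[[i j] c] l IH].
  - exists 0. intros t. simpl. rewrite Rabs_R0. lra.
  - destruct IH as [A HA]. exists (Rabs c + A). intros t. simpl.
    eapply Rle_trans; [apply Rabs_triang|]. rewrite !Rabs_mult.
    assert (Hs := Hpow (sin t) i (Rabs_le _ _ (SIN_bound t))).
    assert (Hc := Hpow (cos t) j (Rabs_le _ _ (COS_bound t))).
    assert (Rabs (sin t ^ i) * Rabs (cos t ^ j) <= 1).
    { rewrite <- (Rmult_1_l 1). apply Rmult_le_compat; auto; apply Rabs_pos. }
    assert (Rabs c * (Rabs (sin t ^ i) * Rabs (cos t ^ j)) <= Rabs c * 1).
    { apply Rmult_le_compat_l; auto. apply Rabs_pos. }
    specialize (HA t). rewrite Rmult_assoc. lra.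
Qed.

Lemma periodic_reduce (v : R -> R) T : 0 < T -> (forall t, v (t + T) = v t) ->
  forall t, exists s, 0 <= s <= T /\ v t = v s.
Proof.
  intros HT Hv.
  assert (Hshift : forall n t, v (t + INR n * T) = v t).
  { induction n as [|n IH]; intros t.
    - simpl. f_equal. ring.
    - rewrite S_INR, <- (IH t), <- (Hv (t + INR n * T)). f_equal. ring. }
  intros t. destruct (Rle_dec 0 t) as [Ht|Ht].
  - destruct (nfloor_ex (t / T)) as [n Hn]; [apply Rdiv_le_0_compat; lra|].
    assert (INR n * T <= t < (INR n + 1) * T).
    { split; [apply (Rmult_le_reg_r (/ T))|apply (Rmult_lt_reg_r (/ T))];
        try apply Rinv_0_lt_compat; auto; field_simplify; lra. }
    exists (t - INR n * T). split; [lra|].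
    rewrite <- (Hshift n (t - INR n * T)). f_equal. ring.
  - destruct (nfloor_ex (- t / T)) as [n Hn]; [apply Rdiv_le_0_compat; lra|].
    assert (INR n * T <= - t < (INR n + 1) * T).
    { split; [apply (Rmult_le_reg_r (/ T))|apply (Rmult_lt_reg_r (/ T))];
        try apply Rinv_0_lt_compat; auto; field_simplify; lra. }
    exists (t + INR (S n) * T). rewrite S_INR. split; [lra|].
    symmetry. rewrite <- S_INR. apply Hshift.
Qed.

Lemma periodic_solution_even_zeros (a b v : R -> R) T m : 0 < T -> is_solution a b v ->
  v T = v 0 -> a T = a 0 -> b T = b 0 -> zeros_simple_on v 0 T ->
  card_set (fun t => 0 <= t <= T /\ v t = 0) m ->
  exists n, Nat.Even n /\ card_set (fun t => 0 <= t < T /\ v t = 0) n.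
Proof.
  intros HT Hv HvT HaT HbT Hs Hc.
  destruct (card_set_without _ _ T Hc) as [n Hn].
  assert (Hn' : card_set (fun t => 0 <= t < T /\ v t = 0) n).
  { eapply card_set_ext; [|exact Hn]. intros t. split; [intros [[] ?]|intros []]; split; lra. }
  exists n. split; [|exact Hn'].
  apply (even_zeros_of_periodic v (fun t => a t * Rabs (v t) + b t) 0 T n); auto.
  rewrite HvT, HaT, HbT. reflexivity.
Qed.

Lemma large_solution_zero_free (a b v : R -> R) A B T n :
  (forall t, Rabs (a t) <= A) -> (forall t, Rabs (b t) <= B) -> is_solution a b v ->
  T * (B * exp (T * A)) < v 0 -> card_set (fun t => 0 <= t <= T /\ v t = 0) n ->
  forall t, 0 <= t <= T -> v t <> 0.
Proof.
  intros HA HB Hv Hv0 Hc t1 Ht1 Hz1.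
  assert (0 <= A) by (eapply Rle_trans; [apply Rabs_pos|apply (HA 0)]).
  assert (0 <= B) by (eapply Rle_trans; [apply Rabs_pos|apply (HB 0)]).
  set (C := B * exp (T * A)) in Hv0 |- *.
  assert (0 <= C) by (apply Rmult_le_pos; [|apply Rlt_le, exp_pos]; auto).
  assert (0 <= T * C) by (apply Rmult_le_pos; lra).
  destruct (card_set_remove _ _ t1 Hc (conj Ht1 Hz1)) as [k [-> _]].
  destruct (card_set_min _ _ Hc) as [z [[Hz Hfz] Hmin]].
  assert (Hz0 : 0 < z) by (destruct (proj1 Hz) as [|<-]; lra).
  assert (Hnonneg : forall s, 0 <= s <= z -> 0 <= v s).
  { intros s Hs. destruct (Req_dec s z) as [->|]; [lra|]. left.
    apply (pos_of_zero_free v 0 s (continuity_of_derivative _ _ Hv)); [lra|lra|].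
    intros t Ht Hvt. assert (z <= t) by (apply Hmin; split; [lra|auto]). lra. }
  (* While [v >= 0], the derivative of [exp (A t) v t + C t] is at least [C - exp (A t) B >= 0]. *)
  assert (Hmono : exp (A * 0) * v 0 + C * 0 <= exp (A * z) * v z + C * z).
  { apply (le_of_derivative_nonneg (fun t => exp (A * t) * v t + C * t)
             (fun t => exp (A * t) * (A * v t + (a t * Rabs (v t) + b t)) + C)); [lra| |].
    - intros t _. apply (is_derive_plus (fun t => exp (A * t) * v t) (fun t => C * t)).
      + exact (has_derivative_exp_scale _ _ A Hv t).
      + auto_derive; auto; ring.
    - intros t Ht. rewrite (Rabs_pos_eq (v t)) by (apply Hnonneg; lra).
      specialize (HA t). specialize (HB t).
      apply Rabs_le_between in HA. apply Rabs_le_between in HB.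
      assert (exp (A * t) <= exp (T * A)).
      { destruct (Req_dec (A * t) (T * A)) as [->|]; [lra|]. left. apply exp_increasing. nra. }
      assert (0 < exp (A * t)) by apply exp_pos.
      assert (0 <= (A + a t) * v t) by (apply Rmult_le_pos; [lra|apply Hnonneg; lra]).
      unfold C. nra. }
  rewrite Hfz, Rmult_0_r, Rmult_0_r, exp_0 in Hmono.
  assert (C * z <= T * C) by (rewrite Rmult_comm; apply Rmult_le_compat_r; lra).
  lra.
Qed.

Lemma positive_of_constant_zero_count (a b : R -> R) u A B T c n :
  (forall t, Rabs (a t) <= A) -> (forall t, Rabs (b t) <= B) -> is_solution_map a b u ->
  (forall x, c < x -> card_set (fun t => 0 <= t <= T /\ u t x = 0) n) ->
  forall x, c < x -> forall t, 0 <= t <= T -> 0 < u t x.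
Proof.
  intros HA HB Hu Hc x Hx t Ht.
  set (X := Rabs c + Rabs (T * (B * exp (T * A))) + 1).
  assert (HX : c < X /\ T * (B * exp (T * A)) < X).
  { generalize (Rle_abs c) (Rle_abs (T * (B * exp (T * A)))) (Rabs_pos c)
      (Rabs_pos (T * (B * exp (T * A)))).
    unfold X. lra. }
  assert (Hn : n = 0%nat).
  { destruct n as [|n]; auto. exfalso.
    destruct (card_set_min _ _ (Hc X (proj1 HX))) as [z [[Hz Hfz] _]].
    apply (large_solution_zero_free a b (fun t => u t X) A B T (S n) HA HB
             (is_solution_map_solution a b u X Hu)) with z; auto.
    - rewrite (proj1 (Hu X)). lra.
    - apply Hc. lra. }
  subst n.
  assert (Hx0 : 0 < x).
  { apply Rnot_le_lt. intros Hx0.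
    apply (card_set_0 _ (Hc 0 ltac:(lra)) 0). split; [lra|apply (proj1 (Hu 0))]. }
  apply (pos_of_zero_free (fun t => u t x) 0 t); [|lra|rewrite (proj1 (Hu x)); lra|].
  - apply (continuity_of_derivative _ _ (is_solution_map_solution a b u x Hu)).
  - intros s Hs Hus. apply (card_set_0 _ (Hc x Hx) s). split; [lra|exact Hus].
Qed.

Lemma negative_of_constant_zero_count (a b : R -> R) u A B T c n :
  (forall t, Rabs (a t) <= A) -> (forall t, Rabs (b t) <= B) -> is_solution_map a b u ->
  (forall x, x < c -> card_set (fun t => 0 <= t <= T /\ u t x = 0) n) ->
  forall x, x < c -> forall t, 0 <= t <= T -> u t x < 0.
Proof.
  intros HA HB Hu Hc x Hx t Ht.
  enough (0 < - u t (- - x)) by (rewrite Ropp_involutive in *; lra).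
  apply (positive_of_constant_zero_count (fun t => - a t) (fun t => - b t)
           (fun t x => - u t (- x)) A B T (- c) n); [| | | |lra|exact Ht].
  - intros s. rewrite Rabs_Ropp. apply HA.
  - intros s. rewrite Rabs_Ropp. apply HB.
  - apply is_solution_map_opp, Hu.
  - intros y Hy. eapply card_set_ext; [|apply (Hc (- y)); lra]. intros s. lra.
Qed.

Lemma in_some_cell (xs : nat -> R) r x0 : (forall i, (1 <= i <= r)%nat -> x0 <> xs i) ->
  exists i, (i <= r)%nat /\ in_cell xs r i x0.
Proof.
  intros Hnot. unfold in_cell.
  assert (Hclimb : forall d k, (k + d = r)%nat -> (k = 0%nat \/ xs k < x0) ->
            exists i, (i <= r)%nat /\ (i = 0%nat \/ xs i < x0) /\ (i = r \/ x0 < xs (S i))).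
  { induction d as [|d IH]; intros k Hk Hbelow.
    - exists k. split; [lia|]. split; [auto|left; lia].
    - destruct (Rlt_dec x0 (xs (S k))) as [Habove|Habove].
      + exists k. split; [lia|]. split; auto.
      + apply (IH (S k)); [lia|]. right.
        assert (x0 <> xs (S k)) by (apply Hnot; lia). lra. }
  apply (Hclimb r 0%nat); auto.
Qed.

Theorem corollary3p2
  (a b : R -> R) (u : R -> R -> R) (r : nat) (xs : nat -> R) (x0 : R)
  (Ha : trig_poly a) (Hb : trig_poly b) (Hbs : only_simple_zeros b)
  (Hu : is_solution_map a b u)
  (Hxs : forall i, (1 <= i < r)%nat -> xs i < xs (S i))
  (Hcells : forall i, (i <= r)%nat -> exists n : nat, forall x, in_cell xs r i x ->
      zeros_simple_on (fun t => u t x) 0 (2 * PI) /\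
      card_set (fun t => 0 <= t <= 2 * PI /\ u t x = 0) n)
  (Hper : u (2 * PI) x0 = x0)
  (Hnot : forall i, (1 <= i <= r)%nat -> x0 <> xs i) :
  (exists n : nat, Nat.Even n /\ card_set (fun t => 0 <= t < 2 * PI /\ u t x0 = 0) n)
  /\ zeros_simple_on (fun t => u t x0) 0 (2 * PI)
  /\ ((1 <= r)%nat ->
        (xs r < x0 -> forall t, 0 < u t x0) /\
        (x0 < xs 1%nat -> forall t, u t x0 < 0))
  /\ ((forall x, (exists t, 0 <= t <= 2 * PI /\ u t x = 0 /\ Derive (fun s => u s x) t = 0)
                 <-> exists i, (1 <= i <= r)%nat /\ x = xs i) ->
      (1 <= r)%nat -> xs 1%nat < x0 < xs r ->
      (exists t, 0 < u t x0) /\ (exists t, u t x0 < 0)).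
Proof.
  assert (H2pi : 0 < 2 * PI) by (generalize PI_RGT_0; lra).
  destruct (trig_poly_bounded a Ha) as [A HA].
  destruct (trig_poly_bounded b Hb) as [B HB].
  assert (Hper0 : forall f, trig_poly f -> f (2 * PI) = f 0).
  { intros f Hf. rewrite <- (trig_poly_periodic f Hf 0), Rplus_0_l. reflexivity. }
  assert (Hv := is_solution_map_solution a b u x0 Hu).
  assert (Hv2pi : u (2 * PI) x0 = u 0 x0) by (rewrite Hper; symmetry; apply Hu).
  assert (Hvper : forall t, u (t + 2 * PI) x0 = u t x0)
    by (apply (solution_periodic a b (fun t => u t x0) A (2 * PI)); auto using trig_poly_periodic).
  destruct (in_some_cell xs r x0 Hnot) as [i [Hi Hcell]].
  destruct (Hcells i Hi) as [m Hm]. destruct (Hm x0 Hcell) as [Hsimp Hcard].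
  split; [|split; [exact Hsimp|split]].
  - apply (periodic_solution_even_zeros a b _ (2 * PI) m); auto.
  - intros Hr. split; intros Hx t;
      destruct (periodic_reduce (fun t => u t x0) (2 * PI) H2pi Hvper t) as [s [Hs ->]].
    + destruct (Hcells r (le_n r)) as [n Hn].
      apply (positive_of_constant_zero_count a b u A B (2 * PI) (xs r) n); auto.
      intros x Hxr. apply Hn. split; [right|left]; auto.
    + destruct (Hcells 0%nat (Nat.le_0_l r)) as [n Hn].
      apply (negative_of_constant_zero_count a b u A B (2 * PI) (xs 1%nat) n); auto.
      intros x Hx1. apply Hn. split; [left|right]; auto.
  - intros Hchar Hr [Hx1 Hxr].
    destruct (proj2 (Hchar (xs 1%nat))) as [t1 [_ [Hz1 _]]]; [exists 1%nat; split; [lia|auto]|].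
    destruct (proj2 (Hchar (xs r))) as [tr [_ [Hzr _]]]; [exists r; split; [lia|auto]|].
    split; [exists t1; rewrite <- Hz1|exists tr; rewrite <- Hzr];
      apply (solution_map_increasing a b A u HA Hu); auto.
Qed.
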